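(* Let $\mu$ be a (complex or signed) Borel measure on $\mathbb{R}^{k+l}=\mathbb{R}^k\times\mathbb{R}^l$ and let $\alpha>0$. Suppose that $\mu(I\times A)=0$ for every parallelepiped $I\subset\mathbb{R}^k$ and every Borel set $A\subset\mathbb{R}^l$ with $\dim A<\alpha$. Then $\dim\mu\ge\alpha$.
   Context: $\dim A$ denotes Hausdorff dimension. For a measure $\mu$, $\dim\mu=\inf\{\gamma : \text{there is a Borel set } F \text{ with } \mu(F)\ne0 \text{ and } \dim F\le\gamma\}$. *)

From HB Require Import structures.
From mathcomp Require Import all_boot all_order all_algebra.
From mathcomp Require Import all_classical all_reals all_analysis.
Set Implicit Arguments. Unset Strict Implicit. Unset Printing Implicit Defensive.
Import Order.TTheory GRing.Theory Num.Theory.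
Import numFieldNormedType.Exports.
Local Open Scope classical_set_scope.
Local Open Scope ring_scope.

Section Defs.
Variable R : realType.

Definition enorm (n : nat) (v : 'rV[R]_n) : R :=
  Num.sqrt (\sum_(i < n) (v ord0 i) ^+ 2).

(* diameter (w.r.t. the Euclidean metric) of a set; only used on bounded sets *)
Definition ediam (n : nat) (U : set 'rV[R]_n) : R :=
  sup [set r | exists x y, U x /\ U y /\ r = enorm (x - y)].

Definition delta_cover (n : nat) (delta : R) (A : set 'rV[R]_n)
    (U : nat -> set 'rV[R]_n) : Prop :=
  (forall i x y, U i x -> U i y -> enorm (x - y) <= delta) /\
  A `<=` \bigcup_i U i.

Definition hausdorff_content (n : nat) (s delta : R) (A : set 'rV[R]_n)
  : \bar R :=
  ereal_inf [set (\sum_(0 <= i <oo) ((ediam (U i)) `^ s)%:E)%E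
            | U in delta_cover delta A].

Definition hausdorff_measure (n : nat) (s : R) (A : set 'rV[R]_n) : \bar R :=
  ereal_sup [set hausdorff_content s delta A | delta in [set d : R | 0 < d]].

Definition hdim (n : nat) (A : set 'rV[R]_n) : \bar R :=
  ereal_inf [set s%:E | s in [set s : R | 0 < s /\ hausdorff_measure s A = 0%E]].

Definition borel_set (n : nat) : set (set 'rV[R]_n) := <<s (@open 'rV[R]_n) >>.
Definition BorelRn (n : nat) := g_sigma_algebraType (@open 'rV[R]_n).

Definition prodset (k l : nat) (I : set 'rV[R]_k) (A : set 'rV[R]_l)
  : set 'rV[R]_(k + l) :=
  [set z | I (lsubmx z) /\ A (rsubmx z)].

Definition box (k : nat) (a b : 'rV[R]_k) : set 'rV[R]_k :=
  [set x | forall i, a ord0 i <= x ord0 i <= b ord0 i].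

(* dimension of the complex measure mu = nu1 + i nu2:
   inf { gamma : exists Borel F, mu(F) <> 0 and dim F <= gamma } *)
Definition cmeasure_dim (n : nat)
    (nu1 nu2 : {charge set (BorelRn n) -> \bar R}) : \bar R :=
  ereal_inf [set g%:E | g in [set g : R | exists F : set 'rV[R]_n,
       borel_set F /\ (nu1 F <> 0%E \/ nu2 F <> 0%E) /\ (hdim F <= g%:E)%E]].

End Defs.

From HB Require Import structures.
From mathcomp Require Import all_boot all_order all_algebra.
From mathcomp Require Import all_classical all_reals all_analysis.
From mathcomp Require Import lra.
Set Implicit Arguments. Unset Strict Implicit. Unset Printing Implicit Defensive.
Import Order.TTheory GRing.Theory Num.Theory.
Import numFieldNormedType.Exports.
Local Open Scope classical_set_scope.
Local Open Scope ring_scope.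

(* If a Borel set F in R^k x R^l has dimension < alpha, then H^s(F) = 0 for
   some s < alpha.  The projection onto R^l is 1-Lipschitz, so the projection
   of F is H^s-null as well, hence contained in a Borel H^s-null set A.  Every
   Borel subset B of A has dimension <= s < alpha, so by hypothesis mu vanishes
   on all rectangles I x B; by the pi-lambda theorem mu then vanishes on every
   Borel subset of R^k x A, in particular on F.  So only sets of dimension
   >= alpha can carry mass, which is dim mu >= alpha. *)

Section hausdorff_null_sets.
Variables (R : realType) (n : nat).
Implicit Types (X Y : set 'rV[R]_n) (s d e : R).

Lemma hausdorff_content_ge0 s d X : (0 <= hausdorff_content s d X)%E.
Proof.
apply: le_ereal_inf_tmp => _ [U _ <-]; apply: nneseries_ge0 => i _ _.
by rewrite lee_fin powR_ge0.
Qed.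

Lemma hausdorff_content_le_measure s d X : 0 < d ->
  (hausdorff_content s d X <= hausdorff_measure s X)%E.
Proof. by move=> d0; apply: ereal_sup_ubound; exists d. Qed.

Lemma hausdorff_measure_ge0 s X : (0 <= hausdorff_measure s X)%E.
Proof.
exact: le_trans (hausdorff_content_ge0 s 1 X) (hausdorff_content_le_measure _ _ ltr01).
Qed.

Lemma hausdorff_measure0_cover s X d e : hausdorff_measure s X = 0%E ->
  0 < d -> 0 < e -> exists U, delta_cover d X U /\
    (\sum_(0 <= i <oo) ((ediam (U i)) `^ s)%:E < e%:E)%E.
Proof.
move=> X0 d0 e0; have : (hausdorff_content s d X < e%:E)%E.
  by rewrite (le_lt_trans (hausdorff_content_le_measure s X d0)) // X0 lte_fin.
by move=> /ereal_inf_lt[_ [U UC <-] lt]; exists U.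
Qed.

Lemma hausdorff_measure_eq0 s X :
  (forall d e, 0 < d -> 0 < e -> exists U, delta_cover d X U /\
    (\sum_(0 <= i <oo) ((ediam (U i)) `^ s)%:E <= e%:E)%E) ->
  hausdorff_measure s X = 0%E.
Proof.
move=> small; apply/eqP; rewrite eq_le hausdorff_measure_ge0 andbT.
apply: ge_ereal_sup => _ [d d0 <-]; apply/lee_addgt0Pr => e e0; rewrite add0e.
have [U [UX Ue]] := small d e d0 e0.
by apply: le_trans Ue; apply: ereal_inf_lbound; exists U.
Qed.

Lemma hausdorff_measure0_subset s X Y : Y `<=` X ->
  hausdorff_measure s X = 0%E -> hausdorff_measure s Y = 0%E.
Proof.
move=> YX X0; apply: hausdorff_measure_eq0 => d e d0 e0.
have [U [[Ud XU] Ue]] := hausdorff_measure0_cover X0 d0 e0.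
by exists U; split; [split=> //; apply: subset_trans XU|exact: ltW].
Qed.

Lemma hdim_le_hausdorff_measure0 s X : 0 < s -> hausdorff_measure s X = 0%E ->
  (hdim X <= s%:E)%E.
Proof. by move=> s0 X0; apply: ereal_inf_lbound; exists s. Qed.

Lemma hdim_lt_hausdorff_measure0 X a : (hdim X < a%:E)%E ->
  exists s, [/\ 0 < s, s < a & hausdorff_measure s X = 0%E].
Proof.
by move=> /ereal_inf_lt[_ [s [s0 X0] <-]]; rewrite lte_fin => sa; exists s.
Qed.

End hausdorff_null_sets.

Section euclidean_norm.
Variable R : realType.

Lemma enorm_ge0 n (v : 'rV[R]_n) : 0 <= enorm v.
Proof. exact: sqrtr_ge0. Qed.

Lemma normr_coord_le_enorm n (v : 'rV[R]_n) j : `|v ord0 j| <= enorm v.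
Proof.
rewrite /enorm -sqrtr_sqr ler_sqrt; last by apply: sumr_ge0 => i _; exact: sqr_ge0.
by rewrite (bigD1 j) //= lerDl; apply: sumr_ge0 => i _; exact: sqr_ge0.
Qed.

Lemma enorm_le_coord_bound n (v : 'rV[R]_n) c : 0 <= c ->
  (forall j, `|v ord0 j| <= c) -> enorm v <= c * Num.sqrt n%:R.
Proof.
move=> c0 vc; have -> : c * Num.sqrt n%:R = Num.sqrt (\sum_(i < n) c ^+ 2).
  rewrite sumr_const card_ord -[c ^+ 2 *+ n]mulr_natr sqrtrM ?sqr_ge0 //.
  by rewrite sqrtr_sqr ger0_norm.
rewrite /enorm ler_sqrt; last by apply: sumr_ge0 => i _; exact: sqr_ge0.
by apply: ler_sum => i _; rewrite -real_normK ?num_real // lerXn2r ?nnegrE.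
Qed.

Lemma enorm_rsubmx_le k l (w : 'rV[R]_(k + l)) : enorm (rsubmx w) <= enorm w.
Proof.
rewrite /enorm ler_sqrt; last by apply: sumr_ge0 => i _; exact: sqr_ge0.
rewrite big_split_ord /=; under eq_bigr do rewrite mxE.
by rewrite lerDr; apply: sumr_ge0 => i _; exact: sqr_ge0.
Qed.

End euclidean_norm.

Section diameters_and_boxes.
Variables (R : realType) (n : nat).
Implicit Types (U : set 'rV[R]_n) (a b c x y : 'rV[R]_n) (d r : R).

Lemma le_ediam U d x y : (forall x y, U x -> U y -> enorm (x - y) <= d) ->
  U x -> U y -> enorm (x - y) <= ediam U.
Proof.
move=> Ud Ux Uy; apply: ub_le_sup; last by exists x, y.
by exists d => _ [x' [y' [Ux' [Uy' ->]]]]; exact: Ud.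
Qed.

Lemma ediam_empty U : ~ (exists x, U x) -> ediam U = 0.
Proof.
move=> U0; rewrite /ediam (_ : [set r | _] = set0) ?sup0 //.
by apply/seteqP; split => // r [x [y [Ux _]]]; apply: U0; exists x.
Qed.

Lemma ediam_le U d : 0 <= d ->
  (forall x y, U x -> U y -> enorm (x - y) <= d) -> ediam U <= d.
Proof.
move=> d0 Ud; have [[x Ux]|U0] := pselect (exists x, U x).
  apply: ge_sup; first by exists (enorm (x - x)), x, x.
  by move=> _ [x' [y' [Ux' [Uy' ->]]]]; exact: Ud.
by rewrite ediam_empty.
Qed.

Lemma ediam_ge0 U d : (forall x y, U x -> U y -> enorm (x - y) <= d) ->
  0 <= ediam U.
Proof.
move=> Ud; have [[x Ux]|U0] := pselect (exists x, U x).
  exact: le_trans (enorm_ge0 (x - x)) (le_ediam Ud Ux Ux).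
by rewrite ediam_empty.
Qed.

Definition cbox c r := box (c - const_mx r) (c + const_mx r).

Lemma cboxP c r x : cbox c r x <-> forall j, `|x ord0 j - c ord0 j| <= r.
Proof.
split=> cx j; have := cx j; rewrite !mxE ?ler_norml.
  by move=> /andP[? ?]; apply/andP; split; lra.
by move=> /andP[? ?]; apply/andP; split; lra.
Qed.

Lemma cbox_enorm_le c r x y : 0 <= r -> cbox c r x -> cbox c r y ->
  enorm (x - y) <= 2 * r * Num.sqrt n%:R.
Proof.
move=> r0 /cboxP cx /cboxP cy; apply: enorm_le_coord_bound; first by rewrite mulr_ge0.
move=> j; have := cx j; have := cy j; rewrite !mxE !ler_norml.
by move=> /andP[? ?] /andP[? ?]; apply/andP; split; lra.
Qed.

Lemma cbox_sub c r r' : r <= r' -> cbox c r `<=` cbox c r'.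
Proof. by move=> rr' x /cboxP cx; apply/cboxP => j; exact: le_trans (cx j) rr'. Qed.

Lemma cbox0_exhaust x : exists m : nat, cbox 0 m%:R x.
Proof.
exists (Num.truncn (\sum_j `|x ord0 j|)).+1; apply/cboxP => j; rewrite mxE subr0.
apply/ltW/le_lt_trans/truncnS_gt.
by rewrite (bigD1 j) //= lerDl; apply: sumr_ge0 => i _.
Qed.

Lemma box_setI a b a' b' : box a b `&` box a' b' =
  box (\row_j Num.max (a ord0 j) (a' ord0 j)) (\row_j Num.min (b ord0 j) (b' ord0 j)).
Proof.
apply/seteqP; split => [x [ab ab'] j|x H]; rewrite ?mxE.
  have /andP[? ?] := ab j; have /andP[? ?] := ab' j.
  by rewrite ge_max le_min; do !(apply/andP; split).
by split=> j; have := H j; rewrite !mxE ge_max le_min;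
  move=> /andP[/andP[? ?] /andP[? ?]]; apply/andP.
Qed.

End diameters_and_boxes.

Section product_sets.
Variables (R : realType) (k l : nat).

Lemma prodset_setI (I1 I2 : set 'rV[R]_k) (A1 A2 : set 'rV[R]_l) :
  prodset I1 A1 `&` prodset I2 A2 = prodset (I1 `&` I2) (A1 `&` A2).
Proof. by apply/seteqP; split => [z [[? ?] [? ?]]|z [[? ?] [? ?]]]. Qed.

Lemma box_prodset (a b : 'rV[R]_(k + l)) :
  box a b = prodset (box (lsubmx a) (lsubmx b)) (box (rsubmx a) (rsubmx b)).
Proof.
apply/seteqP; split=> [z ab|z [al ar] i]; first by split=> j; rewrite !mxE; exact: ab.
rewrite -(splitK i); case: (fintype.split i) => j /=.
  by have := al j; rewrite !mxE.
by have := ar j; rewrite !mxE.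
Qed.

End product_sets.

Section borel_sets.
Variable R : realType.

Lemma ball_rowP n (x y : 'rV[R]_n) e :
  ball x e y <-> 0 < e /\ forall j, `|x ord0 j - y ord0 j| < e.
Proof.
split=> [[e0 xy]|[e0 xy]]; split=> //; first by move=> j; exact: xy.
by move=> i j; rewrite (ord1 i); exact: xy.
Qed.

Lemma colsub_continuous n m (g : 'I_m -> 'I_n) :
  continuous (fun x : 'rV[R]_n => colsub g x).
Proof.
move=> x U /nbhs_ballP[e e0 eU]; apply/nbhs_ballP; exists e => // y.
by move=> /ball_rowP[_ xy]; apply/eU/ball_rowP; split=> // j; rewrite !mxE.
Qed.

Lemma measurable_open n (U : set 'rV[R]_n) : open U -> @measurable _ (BorelRn R n) U.
Proof. exact: sub_sigma_algebra. Qed.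

Lemma open_setC_box n (a b : 'rV[R]_n) : open (~` box a b).
Proof.
rewrite openE => x /= xab; apply/nbhs_ballP.
have [j] : exists j, ~~ (a ord0 j <= x ord0 j <= b ord0 j).
  by apply/not_existsP => xj; apply: xab => j; have /negP/negPn := xj j.
rewrite negb_and -!ltNge => /orP[xa|bx].
- exists (a ord0 j - x ord0 j); first by rewrite /= subr_gt0.
  move=> y /ball_rowP[_ /(_ j)]; rewrite ltr_norml => /andP[? ?] /(_ j) /andP[? _].
  lra.
- exists (x ord0 j - b ord0 j); first by rewrite /= subr_gt0.
  move=> y /ball_rowP[_ /(_ j)]; rewrite ltr_norml => /andP[? ?] /(_ j) /andP[_ ?].
  lra.
Qed.

Lemma measurable_box n (a b : 'rV[R]_n) : @measurable _ (BorelRn R n) (box a b).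
Proof.
rewrite -[box a b]setCK; apply: measurableC; apply: measurable_open.
exact: open_setC_box.
Qed.

Lemma measurable_preimage_continuous n m (f : 'rV[R]_n -> 'rV[R]_m) :
  continuous f -> forall B, @measurable _ (BorelRn R m) B ->
  @measurable _ (BorelRn R n) (f @^-1` B).
Proof.
move=> /continuousP fC B mB.
have : @measurable_fun _ _ (BorelRn R n) (BorelRn R m) setT f.
  apply: (@measurability _ _ (BorelRn R n) (BorelRn R m) setT f open) => //.
  by move=> _ [U oU <-]; rewrite setTI; apply: measurable_open; exact: fC.
by move=> /(_ measurableT B mB); rewrite setTI.
Qed.

Lemma measurable_prodset k l (I : set 'rV[R]_k) (A : set 'rV[R]_l) :
  @measurable _ (BorelRn R k) I -> @measurable _ (BorelRn R l) A ->
  @measurable _ (BorelRn R (k + l)) (prodset I A).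
Proof.
move=> mI mA; apply: measurableI; apply: measurable_preimage_continuous => //.
  by rewrite lsubmxEsub; exact: colsub_continuous.
by rewrite rsubmxEsub; exact: colsub_continuous.
Qed.

End borel_sets.

Section hausdorff_null_hull.
Variable R : realType.

Lemma hausdorff_measure0_image n m (f : 'rV[R]_n -> 'rV[R]_m) s
    (X : set 'rV[R]_n) : 0 <= s ->
  (forall x y, enorm (f x - f y) <= enorm (x - y)) ->
  hausdorff_measure s X = 0%E -> hausdorff_measure s (f @` X) = 0%E.
Proof.
move=> s0 f1 X0; apply: hausdorff_measure_eq0 => d e d0 e0.
have [U [[Ud XU] Ue]] := hausdorff_measure0_cover X0 d0 e0.
have fUd i x y : (f @` U i) x -> (f @` U i) y -> enorm (x - y) <= ediam (U i).
  by move=> [u Uu <-] [v Uv <-]; exact: le_trans (f1 u v) (le_ediam (Ud i) Uu Uv).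
exists (fun i => f @` U i); split; first split.
- move=> i x y fx fy; apply: le_trans (fUd i x y fx fy) _.
  exact: ediam_le (ltW d0) (Ud i).
- by move=> _ [x Xx <-]; have [i _ Ux] := XU x Xx; exists i => //; exists x.
- apply: le_trans (ltW Ue); apply: lee_nneseries => [i _ _|i _].
    by rewrite lee_fin powR_ge0.
  rewrite lee_fin ge0_ler_powR ?nnegrE //.
  + exact: ediam_ge0 (fUd i).
  + exact: ediam_ge0 (Ud i).
  + exact: ediam_le (ediam_ge0 (Ud i)) (fUd i).
Qed.

Lemma inv_nat_eventually_le (c t : R) : 0 < t ->
  \forall m \near \oo, c / m.+1%:R <= t.
Proof.
move=> t0; exists (Num.truncn (c / t)) => // m /= cm.
rewrite ler_pdivrMr // -ler_pdivrMl //.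
rewrite mulrC; apply: ltW; apply: lt_le_trans (truncnS_gt _) _.
by rewrite ler_nat.
Qed.

Lemma borel_enclosure n (U : set 'rV[R]_n) d :
  (forall x y, U x -> U y -> enorm (x - y) <= d) ->
  exists2 B, @measurable _ (BorelRn R n) B & U `<=` B /\
    forall y y', B y -> B y' -> enorm (y - y') <= 2 * Num.sqrt n%:R * ediam U.
Proof.
move=> Ud; have [[u Uu]|U0] := pselect (exists u, U u); last first.
  by exists set0 => //; split=> // x Ux; apply: U0; exists x.
exists (cbox u (ediam U)); first exact: measurable_box.
split=> [x Ux|y y' uy uy']; last first.
  by rewrite mulrAC; apply: cbox_enorm_le uy uy'; exact: ediam_ge0 Ud.
apply/cboxP => j; have := normr_coord_le_enorm (x - u) j; rewrite !mxE.
by move=> /le_trans; apply; exact: le_ediam Ud Ux Uu.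
Qed.

Lemma hausdorff_measure0_borel_cover n s (X : set 'rV[R]_n) t :
  0 < s -> hausdorff_measure s X = 0%E -> 0 < t ->
  exists B : (set 'rV[R]_n)^nat, [/\ forall i, @measurable _ (BorelRn R n) (B i),
    delta_cover (2 * Num.sqrt n%:R * t) X B &
    (\sum_(0 <= i <oo) ((ediam (B i)) `^ s)%:E
      <= ((2 * Num.sqrt n%:R) `^ s * t)%:E)%E].
Proof.
move=> s0 X0 t0; set K := 2 * Num.sqrt n%:R.
have K0 : 0 <= K by rewrite mulr_ge0 ?sqrtr_ge0.
have [U [[Ut XU] Us]] := hausdorff_measure0_cover X0 t0 t0.
have /choice[B HB] i : exists B, [/\ @measurable _ (BorelRn R n) B, U i `<=` B &
    forall y y', B y -> B y' -> enorm (y - y') <= K * ediam (U i)].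
  by have [B mB [UB Bd]] := borel_enclosure (Ut i); exists B.
have Bd i : forall y y', B i y -> B i y' -> enorm (y - y') <= K * ediam (U i).
  by case: (HB i).
have dU0 i := ediam_ge0 (Ut i).
exists B; split; [by move=> i; case: (HB i)|split|].
- move=> i y y' By By'; apply: le_trans (Bd i _ _ By By') _.
  by rewrite ler_wpM2l //; exact: ediam_le (ltW t0) (Ut i).
- by move=> x /XU[i _ Ux]; exists i => //; case: (HB i) => _ UB _; exact: UB.
apply: le_trans (_ : _ <= \sum_(0 <= i <oo) ((K `^ s)%:E * (ediam (U i) `^ s)%:E))%E _.
  apply: lee_nneseries => [i _ _|i _]; first by rewrite lee_fin powR_ge0.
  rewrite -EFinM lee_fin -powRM // ge0_ler_powR ?nnegrE ?(ltW s0) ?mulr_ge0 //.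
    exact: ediam_ge0 (Bd i).
  by apply: ediam_le (Bd i); rewrite mulr_ge0.
rewrite nneseriesZl; last by move=> i _; rewrite lee_fin powR_ge0.
by rewrite EFinM lee_wpmul2l ?lee_fin ?powR_ge0 // ltW.
Qed.

Lemma hausdorff_measure0_borel_hull n s (X : set 'rV[R]_n) :
  0 < s -> hausdorff_measure s X = 0%E -> exists A,
    [/\ @measurable _ (BorelRn R n) A, X `<=` A & hausdorff_measure s A = 0%E].
Proof.
move=> s0 X0; pose K : R := 2 * Num.sqrt n%:R.
have dl0 m : 0 < m.+1%:R^-1 :> R by rewrite invr_gt0.
have /choice[B HB] m := hausdorff_measure0_borel_cover s0 X0 (dl0 m).
exists (\bigcap_m \bigcup_i B m i); split.
- apply: bigcapT_measurable => m; apply: bigcupT_measurable => i.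
  by case: (HB m).
- by move=> x Xx m _; have [_ [_ XB] _] := HB m; exact: XB.
apply: hausdorff_measure_eq0 => de ep de0 ep0.
have [m [Kde Kep]] : exists m, K / m.+1%:R <= de /\ K `^ s / m.+1%:R <= ep.
  exact: filter_ex (filterI (inv_nat_eventually_le K de0)
                            (inv_nat_eventually_le (K `^ s) ep0)).
have [_ [Bd _] Bs] := HB m; exists (B m); split; first split.
- by move=> i y y' By By'; apply: le_trans Kde; exact: (Bd i y y' By By').
- by move=> x /(_ m I).
- by apply: le_trans Bs _; rewrite lee_fin.
Qed.

End hausdorff_null_hull.

Section charge_null_sets.
Context d (T : measurableType d) (R : realType) (nu : {charge set T -> \bar R}).

Lemma charge_bigcup_eq0 (F : (set T)^nat) : (forall i, measurable (F i)) ->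
  trivIset setT F -> (forall i, nu (F i) = 0%E) -> nu (\bigcup_i F i) = 0%E.
Proof.
move=> mF tF F0.
have := @charge_semi_sigma_additive _ _ _ nu F mF tF (bigcupT_measurable _ mF).
rewrite (_ : (fun n => _) = cst 0%E); last first.
  by apply: funext => n; rewrite big1 // => i _; exact: F0.
by move=> /cvg_lim <- //; rewrite lim_cst.
Qed.

Lemma charge_nondecreasing_bigcup_eq0 (F : (set T)^nat) :
  (forall i, measurable (F i)) -> {homo F : n m / (n <= m)%N >-> (n <= m)%O} ->
  (forall i, nu (F i) = 0%E) -> nu (\bigcup_i F i) = 0%E.
Proof.
move=> mF ndF F0; rewrite -eq_bigcup_seqD; apply: charge_bigcup_eq0.
- by case=> [|i] /=; [exact: mF|exact: measurableD].
- exact: trivIset_seqD.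
case=> [|i] //=; rewrite chargeD // setIidr; last exact/subsetPset/ndF.
by rewrite !F0 oppe0 adde0.
Qed.

Lemma dynkin_charge_null_trace (S : set T) : measurable S -> nu S = 0%E ->
  dynkin [set X | measurable X /\ nu (X `&` S) = 0%E].
Proof.
move=> mS S0; split.
- by split; [exact: measurableT|rewrite setTI].
- move=> X [mX XS0]; split; first exact: measurableC.
  by rewrite setIC -setDE chargeD // setIC XS0 S0 oppe0 adde0.
- move=> F tF mF; split; first by apply: bigcupT_measurable => i; case: (mF i).
  rewrite setI_bigcupl; apply: charge_bigcup_eq0; last by move=> i; case: (mF i).
    by move=> i; apply: measurableI => //; case: (mF i).
  exact: trivIset_setIr.
Qed.

End charge_null_sets.

Section rectangles.
Variable R : realType.

Lemma open_sub_sigma_boxes n (G : set (set 'rV[R]_n)) :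
  (forall a b, G (box a b)) -> open `<=` <<s G >>.
Proof.
move=> Gbox U oU.
(* U is the countable union of the rational cubes it contains. *)
pose C (qN : 'rV[rat]_n * nat) : set 'rV[R]_n :=
  cbox (map_mx ratr qN.1) qN.2.+1%:R^-1.
suff -> : U = \bigcup_(qN in [set qN | C qN `<=` U]) C qN.
  rewrite bigcup_mkcond.
  apply: (@countable_bigcupT_measurable _ (g_sigma_algebraType G)) => [|qN].
    exact: countableP.
  case: ifPn => _; last exact: measurable0.
  by apply: sub_sigma_algebra; exact: Gbox.
apply/seteqP; split=> [z Uz|z [qN CU Cz]]; last exact: CU.
have /nbhs_ballP[e e0 eU] : nbhs z U by exact: open_nbhs_nbhs.
have e3 : 0 < e / 3 by rewrite divr_gt0.
have [N] := filter_ex (inv_nat_eventually_le 1 e3).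
rewrite div1r; set r := N.+1%:R^-1 => re.
have r0 : 0 < r by rewrite invr_gt0.
have /choice[q zq] j : exists q : rat, z ord0 j - r < ratr q < z ord0 j + r.
  have /rat_in_itvoo[q] : z ord0 j - r < z ord0 j + r by lra.
  by rewrite in_itv /=; exists q.
have Cz : cbox (map_mx ratr (\row_j q j)) r z.
  apply/cboxP => j; rewrite !mxE ler_norml.
  by have /andP[? ?] := zq j; apply/andP; split; lra.
exists (\row_j q j, N); rewrite /C //= -/r => w /cboxP Cw.
apply: eU; apply/ball_rowP; split=> // j.
have /cboxP/(_ j) := Cz; have := Cw j; rewrite !ler_norml ltr_norml.
by move=> /andP[? ?] /andP[? ?]; apply/andP; split; lra.
Qed.

Variables k l : nat.

Definition rectangles : set (set 'rV[R]_(k + l)) :=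
  [set X | exists a b B, @measurable _ (BorelRn R l) B /\ X = prodset (box a b) B].

Lemma rectangles_setI_closed : setI_closed rectangles.
Proof.
move=> _ _ [a [b [B [mB ->]]]] [a' [b' [B' [mB' ->]]]].
rewrite prodset_setI box_setI; do 3 eexists; split; last reflexivity.
exact: measurableI.
Qed.

Lemma borel_sub_sigma_rectangles :
  @measurable _ (BorelRn R (k + l)) `<=` <<s rectangles >>.
Proof.
apply: smallest_sub (smallest_sigma_algebra _ _) _.
apply: open_sub_sigma_boxes => a b; rewrite box_prodset.
exists (lsubmx a), (lsubmx b), (box (rsubmx a) (rsubmx b)).
by split=> //; exact: measurable_box.
Qed.

Lemma charge_eq0_strip (nu : {charge set (BorelRn R (k + l)) -> \bar R})
    (A : set 'rV[R]_l) : @measurable _ (BorelRn R l) A ->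
  (forall a b B, @measurable _ (BorelRn R l) B -> B `<=` A ->
     nu (prodset (box a b) B) = 0%E) ->
  forall F, @measurable _ (BorelRn R (k + l)) F -> F `<=` prodset setT A ->
  nu F = 0%E.
Proof.
move=> mA nuA F mF FA.
(* Exhausting the strip S by bounded strips gives nu S = 0; then the sets X with
   nu (X `&` S) = 0 form a Dynkin system containing the pi-system of rectangles. *)
pose S : set (BorelRn R (k + l)) := prodset setT A.
have mS : @measurable _ (BorelRn R (k + l)) S by exact: measurable_prodset.
have S0 : nu S = 0%E.
  have -> : S = \bigcup_m prodset (cbox 0 m%:R) A.
    apply/seteqP; split=> [z [_ Az]|z [m _ [_ Az]] //].
    by have [m zm] := cbox0_exhaust (lsubmx z); exists m.
  apply: charge_nondecreasing_bigcup_eq0 => [m|m m' mm'|m].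
  - by apply: measurable_prodset => //; exact: measurable_box.
  - by apply/subsetPset => z [zm Az]; split=> //; apply: cbox_sub zm; rewrite ler_nat.
  - exact: nuA.
have rectH : rectangles `<=` [set X | measurable X /\ nu (X `&` S) = 0%E].
  move=> _ [a [b [B [mB ->]]]]; split.
    by apply: measurable_prodset => //; exact: measurable_box.
  rewrite prodset_setI setIT; apply: nuA; [exact: measurableI|exact: subIsetr].
have [_ FS0] := lambda_system_subset rectangles_setI_closed
  (proj1 (dynkin_lambda_system _) (dynkin_charge_null_trace mS S0)) rectH
  (fun _ _ => @subsetT _ _) (borel_sub_sigma_rectangles mF).
by rewrite setIidl in FS0.
Qed.

End rectangles.

Lemma charge_eq0_hdim_lt (R : realType) (k l : nat)
    (nu : {charge set (BorelRn R (k + l)) -> \bar R}) (alpha : R) :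
  (forall (a b : 'rV[R]_k) (A : set 'rV[R]_l),
     borel_set A -> (hdim A < alpha%:E)%E -> nu (prodset (box a b) A) = 0%E) ->
  forall F, borel_set F -> (hdim F < alpha%:E)%E -> nu F = 0%E.
Proof.
move=> nu0 F mF /hdim_lt_hausdorff_measure0[s [s0 salpha F0]].
have /(hausdorff_measure0_borel_hull s0)[A [mA FA A0]] :
    hausdorff_measure s (rsubmx @` F) = 0%E.
  apply: hausdorff_measure0_image (ltW s0) _ F0 => x y.
  by rewrite -raddfB; exact: enorm_rsubmx_le.
apply: (charge_eq0_strip mA) mF _ => [a b B mB BA|z Fz]; last first.
  by split=> //; apply: FA; exists z.
apply: nu0 => //; apply: le_lt_trans (_ : (s%:E < alpha%:E)%E); last by rewrite lte_fin.
exact/hdim_le_hausdorff_measure0/(hausdorff_measure0_subset BA A0).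
Qed.

Theorem mainTheorem5 (R : realType) (k l : nat)
    (nu1 nu2 : {charge set (BorelRn R (k + l)) -> \bar R}) (alpha : R) :
  0 < alpha ->
  (forall (a b : 'rV[R]_k) (A : set 'rV[R]_l),
      borel_set A -> (hdim A < alpha%:E)%E ->
      nu1 (prodset (box a b) A) = 0%E /\ nu2 (prodset (box a b) A) = 0%E) ->
  (alpha%:E <= cmeasure_dim nu1 nu2)%E.
Proof.
move=> _ nu0; apply: le_ereal_inf_tmp => _ [g [F [mF [nuF0 Fg]]] <-].
rewrite leNgt; apply/negP => galpha; have Falpha := le_lt_trans Fg galpha.
case: nuF0 => nuF0; apply: nuF0; apply: (charge_eq0_hdim_lt _ mF Falpha).
- by move=> a b A mA Aalpha; case: (nu0 a b A mA Aalpha).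
- by move=> a b A mA Aalpha; case: (nu0 a b A mA Aalpha).
Qed.
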